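(* Let $n$ be a positive integer and $i,k\in\{1,\ldots,n\}$. Suppose that $H\sim\text{Hyp}(n,i,k)$ satisfies (1) $\mathbb{E}(H) \in (1, \min\{i,k\} -2]$ and (2) $\frac{(n-i)(n-k)}{n}> 1$. Then \[ \mathbb{E}(|H-ik/n|) \ge \frac{e^{-1/8}}{2\sqrt{2}} \cdot \sqrt{\frac{n-1 }{n}} \cdot \sqrt{\text{Var}(H)}. \]
   Context: $\text{Hyp}(n,i,k)$ denotes the hypergeometric distribution: the number of black marbles in a sample without replacement of size $k$ from an urn with $i$ black and $n-i$ white marbles, i.e. $\mathbb{P}(H=j)=\binom{i}{j}\binom{n-i}{k-j}/\binom{n}{k}$. One has $\mathbb{E}(H)=ik/n$ and $\text{Var}(H)=k\cdot\frac{i}{n}\cdot\frac{n-i}{n}\cdot\frac{n-k}{n-1}$. *)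

From mathcomp Require Import all_boot all_order all_algebra.
From mathcomp Require Import reals.
From mathcomp Require Import sequences exp.
Set Implicit Arguments. Unset Strict Implicit. Unset Printing Implicit Defensive.
Import Order.TTheory GRing.Theory Num.Theory.
Local Open Scope ring_scope.

(* P(H = j) for H ~ Hyp(n,i,k): C(i,j) C(n-i,k-j) / C(n,k).
   Only j in {0,...,k} can have positive probability. *)
Definition hyp_pmf (R : realType) (n i k j : nat) : R :=
  ('C(i, j) * 'C(n - i, k - j))%:R / ('C(n, k))%:R.

Definition hyp_E (R : realType) (n i k : nat) (f : nat -> R) : R :=
  \sum_(j < k.+1) hyp_pmf R n i k j * f j.

Definition hyp_mean (R : realType) (n i k : nat) : R :=
  hyp_E n i k (fun j => j%:R).

Definition hyp_var (R : realType) (n i k : nat) : R :=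
  hyp_E n i k (fun j => (j%:R - hyp_mean R n i k) ^+ 2).

(* Write mu = E H, s^2 = Var H and mu_4 = E (H - mu)^4. Since z (z - 3s)^2 (z + 6s) >= 0
   for z = |t|, we have |t| >= (27 s^2 t^2 - t^4) / (54 s^3), hence
   E|H - mu| >= (27 s^4 - mu_4) / (54 s^3) >= 17 s / 54 as soon as mu_4 <= 10 s^4, and
   17/54 >= e^(-1/8) / (2 sqrt 2) because e^(1/8) >= 9/8 and sqrt 2 >= 24/17.
   The factorial moments E[H^_r] = i^_r k^_r / n^_r give the classical closed forms of
   s^2 and mu_4. In terms of the expected cell counts a = ik/n, b = i - a, c = k - a,
   d = (n-i)(n-k)/n of the 2x2 table, which satisfy ad = bc and a + b + c + d = n, the
   hypotheses say a, d > 1 and b, c >= 2, and mu_4 <= 10 s^4 becomes a polynomial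
   inequality in n and ad = (n - 1) s^2. *)

From mathcomp Require Import all_boot all_order all_algebra.
From mathcomp Require Import reals sequences exp.
From mathcomp Require Import zify ring lra.
Import Order.TTheory GRing.Theory Num.Theory.
Local Open Scope ring_scope.
Set Implicit Arguments. Unset Strict Implicit. Unset Printing Implicit Defensive.

Lemma mul_bin_ffact (n k r : nat) : (r <= k)%N ->
  ('C(n, k) * k ^_ r = n ^_ r * 'C(n - r, k - r))%N.
Proof.
elim: r n k => [|r IHr] n k le_rk; first by rewrite muln1 mul1n !subn0.
case: k le_rk => // k le_rk; case: n => [|n]; first by rewrite bin0n ffact0n.
by rewrite ffactSS mulnA (mulnC 'C(_, _)) -mul_bin_diag -mulnA IHr // !subSS mulnA.
Qed.

Lemma Vandermonde_ffact (a m k r : nat) : (r <= a)%N -> (r <= k)%N ->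
  (\sum_(j < k.+1) 'C(a, j) * 'C(m, k - j) * j ^_ r = a ^_ r * 'C(a - r + m, k - r))%N.
Proof.
elim: r a k => [|r IHr] a k le_ra le_rk.
  by under eq_bigr do rewrite muln1; rewrite binomial.Vandermonde mul1n !subn0.
case: a k le_ra le_rk => [|a] [|k] // le_ra le_rk.
rewrite big_ord_recl /= muln0 add0n subSS -mulnA -IHr // big_distrr /=.
apply: eq_bigr => j _; rewrite /bump add1n subSS ffactSS.
have /= diag := mul_bin_diag a.+1 j.
by rewrite !mulnA diag; ring.
Qed.

Lemma natr_ffactSr (R : pzRingType) (j r : nat) :
  (j ^_ r.+1)%:R = (j ^_ r)%:R * (j%:R - r%:R) :> R.
Proof.
rewrite ffactnSr natrM; have [le_rj | lt_jr] := leqP r j; first by rewrite natrB.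
by rewrite ffact_small // !mul0r.
Qed.

Lemma quartic_le_abs (R : realDomainType) (s t : R) : 0 <= s ->
  27 * s ^+ 2 * t ^+ 2 - t ^+ 4 <= 54 * s ^+ 3 * `|t|.
Proof.
move=> s_ge0; rewrite -[t ^+ 4]/(t ^+ (2 * 2)) exprM -(real_normK (num_real t)).
rewrite -subr_ge0 (_ : _ - _ = `|t| * (`|t| - 3 * s) ^+ 2 * (`|t| + 6 * s)); last by ring.
by rewrite mulr_ge0 ?(mulr_ge0 (normr_ge0 t) (sqr_ge0 _)) ?addr_ge0 ?mulr_ge0.
Qed.

Lemma kurtosis_poly_ineq (R : realFieldType) (N w s : R) :
  8 <= N -> 2 * N - 6 <= 3 * w -> 6 * N - 18 <= s ->
  (N - 1) * (N * (N + 1) - 6 * s) + 6 * w * (5 * N - 6) <= 7 * w * ((N - 2) * (N - 3)).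
Proof.
move=> N_ge8 w_ge s_ge.
have q_gt0 : 0 < 7 * N ^+ 2 - 65 * N + 78 by nra.
have cubic_ge0 : 0 <= 11 * N ^+ 3 - 64 * N ^+ 2 + 117 * N - 144 by nra.
nra.
Qed.

Section ExpectedTable.
Variables (R : realFieldType) (a b c d : R).
Local Notation N := (a + b + c + d).

Lemma table_kurtosis_ineq : 1 < a -> 1 < d -> 2 <= b -> 2 <= c -> a * d = b * c ->
  (N - 1) * (N * (N + 1) - 6 * ((a + b) * (c + d)) - 6 * ((a + c) * (b + d)))
    + 6 * (a * d) * (5 * N - 6) <= 7 * (a * d) * ((N - 2) * (N - 3)).
Proof.
move=> a_gt1 d_gt1 b_ge2 c_ge2 adbc.
have ad_ge4 : 4 <= a * d by rewrite adbc; nra.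
have N_ge8 : 8 <= N.
  have : 16 <= (a + d) ^+ 2 by have := sqr_ge0 (a - d); nra.
  nra.
have N_le : 2 * N - 6 <= 3 * (a * d).
  have : 0 <= (a - 1) * (d - 1) by rewrite mulr_ge0 // subr_ge0 ltW.
  have : 0 <= (b - 2) * (c - 2) by rewrite mulr_ge0 // subr_ge0.
  nra.
have margin_ge (p q : R) : 3 <= p -> 3 <= q -> 3 * (p + q) - 9 <= p * q.
  by move=> p_ge3 q_ge3; nra.
have margins_ge : 6 * N - 18 <= (a + b) * (c + d) + (a + c) * (b + d).
  by have := margin_ge (a + b) (c + d); have := margin_ge (a + c) (b + d); lra.
have := kurtosis_poly_ineq N_ge8 N_le margins_ge; lra.
Qed.

End ExpectedTable.

Lemma kurtosis_term_le (R : realFieldType) (x y N V : R) :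
  V = x * y * (N - x) * (N - y) / (N ^+ 2 * (N - 1)) -> 0 < N ->
  1 < x * y / N -> x * y / N <= x - 2 -> x * y / N <= y - 2 -> 1 < (N - x) * (N - y) / N ->
  (N * (N + 1) - 6 * (x * (N - x)) - 6 * (y * (N - y)) + 6 * V * (5 * N - 6))
    / ((N - 2) * (N - 3)) <= 7 * V.
Proof.
move=> V_def N_gt0 a_gt1 a_le_x a_le_y d_gt1.
have N_neq0 : N != 0 by rewrite gt_eqF.
set a := x * y / N in a_gt1 a_le_x a_le_y V_def *.
set d := (N - x) * (N - y) / N in d_gt1.
have sumN : a + (x - a) + (y - a) + d = N by rewrite /a /d; field.
have [b_ge2 c_ge2] : 2 <= x - a /\ 2 <= y - a by split; lra.
have [b_d c_d] : x - a + d = N - y /\ y - a + d = N - x by split; lra.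
have N1_gt0 : 0 < N - 1 by lra.
have ad_bc : a * d = (x - a) * (y - a) by rewrite /a /d; field.
have ad_V : a * d = V * (N - 1) by rewrite V_def /a /d; field; rewrite N_neq0 gt_eqF.
have := table_kurtosis_ineq a_gt1 d_gt1 b_ge2 c_ge2 ad_bc.
rewrite sumN !subrKC b_d c_d ad_V => tab.
rewrite ler_pdivrMr; last by apply: mulr_gt0; lra.
rewrite -(ler_pM2l N1_gt0); lra.
Qed.

Lemma expRN_div_2sqrt2_le (R : realType) :
  expR (- (1 / 8)) / (2 * Num.sqrt 2) <= 17 / 54 :> R.
Proof.
have e_le : expR (- (1 / 8)) <= 8 / 9 :> R.
  have := expR_ge1Dx (1 / 8 : R); have := expR_gt0 (- (1 / 8) : R).
  have : expR (- (1 / 8)) * expR (1 / 8) = 1 :> R by rewrite -expRD addNr expR0.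
  nra.
have r_ge : 24 / 17 <= Num.sqrt 2 :> R.
  have := sqr_sqrtr (ler0n R 2); have := sqrtr_ge0 (2 : R); nra.
rewrite ler_pdivrMr; lra.
Qed.

Section HypergeometricExpectation.
Variables (R : realType) (n i k : nat).

Lemma eq_hyp_E (f g : nat -> R) : f =1 g -> hyp_E n i k f = hyp_E n i k g.
Proof. by move=> fg; apply: eq_bigr => j _; rewrite fg. Qed.

Lemma hyp_ED (f g : nat -> R) :
  hyp_E n i k (fun j => f j + g j) = hyp_E n i k f + hyp_E n i k g.
Proof. by rewrite /hyp_E -big_split; apply: eq_bigr => j _; rewrite mulrDr. Qed.

Lemma hyp_EB (f g : nat -> R) :
  hyp_E n i k (fun j => f j - g j) = hyp_E n i k f - hyp_E n i k g.
Proof. by rewrite /hyp_E -sumrB; apply: eq_bigr => j _; rewrite mulrBr. Qed.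

Lemma hyp_EZ (a : R) (f : nat -> R) :
  hyp_E n i k (fun j => a * f j) = a * hyp_E n i k f.
Proof. by rewrite /hyp_E mulr_sumr; apply: eq_bigr => j _; rewrite mulrCA. Qed.

Lemma hyp_pmf_ge0 j : 0 <= hyp_pmf R n i k j.
Proof. by rewrite divr_ge0. Qed.

Lemma ler_hyp_E (f g : nat -> R) : (forall j, f j <= g j) ->
  hyp_E n i k f <= hyp_E n i k g.
Proof. by move=> fg; apply: ler_sum => j _; rewrite ler_wpM2l ?hyp_pmf_ge0. Qed.

Lemma hyp_var_ge0 : 0 <= hyp_var R n i k.
Proof. by apply: sumr_ge0 => j _; rewrite mulr_ge0 ?hyp_pmf_ge0 ?sqr_ge0. Qed.

Lemma hyp_E_abs_ge (f : nat -> R) (s : R) : 0 < s ->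
  (27 * s ^+ 2 * hyp_E n i k (fun j => f j ^+ 2) - hyp_E n i k (fun j => f j ^+ 4))
    / (54 * s ^+ 3) <= hyp_E n i k (fun j => `|f j|).
Proof.
move=> s_gt0; rewrite ler_pdivrMr ?mulr_gt0 ?exprn_gt0 //.
rewrite [leRHS]mulrC -!hyp_EZ -hyp_EB.
by apply: ler_hyp_E => j; apply: quartic_le_abs; apply: ltW.
Qed.

Lemma hyp_E_abs_ge_sqrt (f : nat -> R) (v : R) : 0 < v ->
  hyp_E n i k (fun j => f j ^+ 2) = v -> hyp_E n i k (fun j => f j ^+ 4) <= 10 * v ^+ 2 ->
  17 / 54 * Num.sqrt v <= hyp_E n i k (fun j => `|f j|).
Proof.
move=> v_gt0 Ef2 Ef4; have s_gt0 : 0 < Num.sqrt v by rewrite sqrtr_gt0.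
apply: le_trans (hyp_E_abs_ge f s_gt0).
rewrite ler_pdivlMr ?mulr_gt0 ?exprn_gt0 // Ef2.
have sv : Num.sqrt v ^+ 2 = v by rewrite sqr_sqrtr // ltW.
move: (Num.sqrt v) sv s_gt0 => s <- s_gt0 in Ef4 *; lra.
Qed.

Lemma hyp_E_ffact r : (i <= n)%N -> (k <= n)%N -> (r <= i)%N -> (r <= k)%N ->
  hyp_E n i k (fun j => (j ^_ r)%:R) = (i ^_ r)%:R * (k ^_ r)%:R / (n ^_ r)%:R :> R.
Proof.
move=> le_in le_kn le_ri le_rk; rewrite /hyp_E /hyp_pmf.
under eq_bigr do rewrite mulrAC -natrM.
rewrite -mulr_suml -natr_sum Vandermonde_ffact //.
have -> : (i - r + (n - i) = n - r)%N by lia.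
have Cn_neq0 : 'C(n, k)%:R != 0 :> R by rewrite pnatr_eq0 -lt0n bin_gt0.
have ffn_neq0 : (n ^_ r)%:R != 0 :> R.
  by rewrite pnatr_eq0 -lt0n ffact_gt0 (leq_trans le_rk).
apply/eqP; rewrite eqr_div // -!natrM eqr_nat; apply/eqP.
by rewrite -!mulnA; congr (_ * _); rewrite mulnC -mul_bin_ffact // mulnC.
Qed.

End HypergeometricExpectation.

Section HypergeometricMoments.
Variables (R : realType) (n i k : nat).
Hypotheses (le_in : (i <= n)%N) (le_kn : (k <= n)%N).
Local Notation x := (i%:R : R).
Local Notation y := (k%:R : R).
Local Notation N := (n%:R : R).
Local Notation mean := (hyp_mean R n i k).
Local Notation V := (hyp_var R n i k).

Lemma hyp_meanE : (0 < i)%N -> (0 < k)%N -> mean = x * y / N.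
Proof.
move=> lt0i lt0k; have := hyp_E_ffact R le_in le_kn lt0i lt0k; rewrite !ffactn1 => <-.
by apply: eq_hyp_E => j; rewrite ffactn1.
Qed.

Lemma hyp_varE : (1 < i)%N -> (1 < k)%N ->
  V = x * y * (N - x) * (N - y) / (N ^+ 2 * (N - 1)).
Proof.
move=> lt1i lt1k; rewrite /hyp_var (hyp_meanE (ltnW lt1i) (ltnW lt1k)).
set mu := x * y / N.
have -> : hyp_E n i k (fun j => (j%:R - mu) ^+ 2) = hyp_E n i k (fun j =>
    (j ^_ 2)%:R + ((1 - 2 * mu) * (j ^_ 1)%:R + mu ^+ 2 * (j ^_ 0)%:R)).
  by apply: eq_hyp_E => j; rewrite !natr_ffactSr ffactn0; ring.
rewrite !hyp_ED !hyp_EZ !hyp_E_ffact ?(ltnW lt1i) ?(ltnW lt1k) //.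
have N_ge2 : 2 <= N by rewrite ler_nat (leq_trans lt1k).
by rewrite !natr_ffactSr /mu !ffactn0; field; rewrite !gt_eqF //; lra.
Qed.

Lemma hyp_moment4E : (3 < i)%N -> (3 < k)%N ->
  hyp_E n i k (fun j => (j%:R - mean) ^+ 4) =
  3 * V ^+ 2 + V * (N * (N + 1) - 6 * (x * (N - x)) - 6 * (y * (N - y))
                    + 6 * V * (5 * N - 6)) / ((N - 2) * (N - 3)).
Proof.
move=> lt3i lt3k; have [lt1i lt1k] : (1 < i)%N /\ (1 < k)%N by split; lia.
rewrite hyp_varE // (hyp_meanE (ltnW lt1i) (ltnW lt1k)); set mu := x * y / N.
have -> : hyp_E n i k (fun j => (j%:R - mu) ^+ 4) = hyp_E n i k (fun j =>
    (j ^_ 4)%:R + ((6 - 4 * mu) * (j ^_ 3)%:R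
    + ((7 - 12 * mu + 6 * mu ^+ 2) * (j ^_ 2)%:R
    + ((1 - 4 * mu + 6 * mu ^+ 2 - 4 * mu ^+ 3) * (j ^_ 1)%:R + mu ^+ 4 * (j ^_ 0)%:R)))).
  by apply: eq_hyp_E => j; rewrite !natr_ffactSr ffactn0; ring.
rewrite !hyp_ED !hyp_EZ !hyp_E_ffact //;
  try by [apply: leq_trans lt3i | apply: leq_trans lt3k].
have N_ge4 : 4 <= N by rewrite ler_nat (leq_trans lt3k).
by rewrite !natr_ffactSr /mu !ffactn0; field; rewrite !gt_eqF //; lra.
Qed.

Lemma hyp_moment4_le : (3 < i)%N -> (3 < k)%N -> 1 < x * y / N ->
  x * y / N <= x - 2 -> x * y / N <= y - 2 -> 1 < (N - x) * (N - y) / N ->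
  hyp_E n i k (fun j => (j%:R - mean) ^+ 4) <= 10 * V ^+ 2.
Proof.
move=> lt3i lt3k mean_gt1 mean_le_x mean_le_y cond.
have [lt1i lt1k] : (1 < i)%N /\ (1 < k)%N by split; lia.
have N_gt0 : 0 < N by rewrite ltr0n; lia.
have := kurtosis_term_le (hyp_varE lt1i lt1k) N_gt0 mean_gt1 mean_le_x mean_le_y cond.
move/(ler_wpM2l (hyp_var_ge0 R n i k)); rewrite hyp_moment4E // -mulrA; lra.
Qed.

Lemma hyp_E_abs_dev_ge : 1 < mean -> mean <= (minn i k)%:R - 2 ->
  1 < ((n - i) * (n - k))%:R / N ->
  17 / 54 * Num.sqrt V <= hyp_E n i k (fun j => `|j%:R - (i * k)%:R / N|).
Proof.
move=> mean_gt1 mean_le cond.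
have [lt3i lt3k] : (3 < i)%N /\ (3 < k)%N.
  have : (3 < minn i k)%N by rewrite -(ltr_nat R); lra.
  by rewrite leq_min => /andP.
have [min_le_x min_le_y] : (minn i k)%:R <= x /\ (minn i k)%:R <= y.
  by rewrite !ler_nat geq_minl geq_minr.
have [lt1i lt1k] : (1 < i)%N /\ (1 < k)%N by split; lia.
have mean_xy := hyp_meanE (ltnW lt1i) (ltnW lt1k).
rewrite natrM -mean_xy; rewrite mean_xy in mean_gt1 mean_le.
rewrite natrM !natrB // in cond.
have N_ge4 : 4 <= N by rewrite ler_nat (leq_trans lt3k).
have V_gt0 : 0 < V.
  have cross_gt0 : 0 < (N - x) * (N - y) by move: cond; rewrite ltr_pdivlMr; lra.
  rewrite hyp_varE //.
  have xy_gt0 : 0 < x * y by rewrite mulr_gt0 ?ltr0n ?(ltnW lt1i) ?(ltnW lt1k).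
  apply: divr_gt0; first by rewrite -mulrA mulr_gt0.
  by rewrite mulr_gt0 ?exprn_gt0 //; lra.
apply: hyp_E_abs_ge_sqrt => //; apply: hyp_moment4_le => //; lra.
Qed.
End HypergeometricMoments.

Unset Implicit Arguments.

Theorem theorem4 (R : realType) (n i k : nat) :
  (0 < n)%N -> (1 <= i <= n)%N -> (1 <= k <= n)%N ->
  1 < hyp_mean R n i k ->
  hyp_mean R n i k <= (minn i k)%:R - 2 ->
  1 < ((n - i) * (n - k))%:R / n%:R :> R ->
  expR (- (1 / 8)) / (2 * Num.sqrt 2) * Num.sqrt ((n%:R - 1) / n%:R)
    * Num.sqrt (hyp_var R n i k)
  <= hyp_E n i k (fun j => `| j%:R - (i * k)%:R / n%:R |).
Proof.
move=> n_gt0 /andP[_ le_in] /andP[_ le_kn] mean_gt1 mean_le cond.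
apply: le_trans (hyp_E_abs_dev_ge le_in le_kn mean_gt1 mean_le cond).
rewrite ler_wpM2r ?sqrtr_ge0 // (le_trans _ (expRN_div_2sqrt2_le R)) // ler_piMr //.
  by rewrite divr_ge0 ?mulr_ge0 ?sqrtr_ge0 // ltW ?expR_gt0.
by rewrite -[X in _ <= X]sqrtr1 ler_sqrt // ler_pdivrMr ?ltr0n // mul1r gerBl.
Qed.
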